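(* Let $x_0\in\mathbb{R}$ be a constant leader state and consider scalar followers updated synchronously for $t\in\mathbb{Z}_{\ge0}$ by $$x_i(t+1)=\frac{1}{1+n_i+\gamma_i}\Big(x_i(t)+\sum_{j\in\mathcal{N}_i}x_j(t-T_{ji})+\gamma_i x_0\Big),\qquad i=1,\dots,n,$$ where the neighbor sets $\mathcal{N}_i$ among followers are fixed and symmetric, $n_i=|\mathcal{N}_i|$, $\gamma_i\in\{0,1\}$, the delays $T_{ji}\in\mathbb{Z}_{\ge0}$ are constant, and the whole network including the leader (edges from the leader to each $i$ with $\gamma_i=1$) is connected. Then, regardless of the delays and initial values, $x_i(t)\to x_0$ as $t\to\infty$ for all $i$. *)

From HB Require Import structures.
From mathcomp Require Import all_boot all_order all_algebra.
From mathcomp Require Import all_classical all_reals topology normedtype sequences.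
Set Implicit Arguments. Unset Strict Implicit. Unset Printing Implicit Defensive.
Import Order.TTheory GRing.Theory Num.Theory.

(* Follower nodes are 'I_n; the leader is the extra node None of option 'I_n.
   [adj] is the (undirected) follower neighbor relation, [gamma i] says whether
   follower i receives the leader's state. *)
Definition leader_net (n : nat) (adj : rel 'I_n) (gamma : 'I_n -> bool)
  : rel (option 'I_n) :=
  fun u v => match u, v with
  | Some i, Some j => adj i j
  | None, Some j => gamma j
  | Some i, None => gamma i
  | None, None => false
  end.

Definition net_connected (n : nat) (adj : rel 'I_n) (gamma : 'I_n -> bool) : Prop :=
  forall u v : option 'I_n, connect (leader_net adj gamma) u v.

Definition deg (n : nat) (adj : rel 'I_n) (i : 'I_n) : nat := #|[pred j | adj i j]|.

From HB Require Import structures.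
From mathcomp Require Import all_boot all_order all_algebra.
From mathcomp Require Import all_classical all_reals topology normedtype sequences.
From mathcomp Require Import ring lra zify.
Import Order.TTheory GRing.Theory Num.Theory numFieldNormedType.Exports.
Set Implicit Arguments. Unset Strict Implicit.
Local Open Scope classical_set_scope.
Local Open Scope ring_scope.

(* Regard the leader as an extra node with constant error 0.  A follower's new
   error is then a convex combination, with weights at least a := 1/(n+2), of
   its own error and the delayed errors of its neighbours in the whole network.
   Hence a bound V on all errors over a window of D + 1 steps (D the largest
   delay) persists, and, by induction along a path to the leader, a node at
   distance k has error at most (1 - a^k) V after k (D + 1) further steps.
   Connectivity makes k uniform, so the bound contracts by a fixed factor
   1 - a^K < 1 every K (D + 1) + D steps. *)

Lemma big_option (V : nmodType) (I : finType) (P : pred (option I))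
    (F : option I -> V) :
  \sum_(v | P v) F v =
    (if P None then F None else 0) + \sum_(i | P (Some i)) F (Some i).
Proof.
rewrite big_mkcond [X in _ + X]big_mkcond (bigD1 None) //=; congr (_ + _).
rewrite (reindex_omap Some id) => [|[]] //.
by apply: eq_bigl => i; rewrite /= eqxx.
Qed.

Lemma cvg_geometric_envelope (R : realType) (u : nat -> R) (rho V : R) (P : nat) :
  0 <= rho < 1 -> (forall m t, (m * P <= t)%N -> `|u t| <= rho ^+ m * V) ->
  u @ \oo --> 0.
Proof.
case/andP=> rho_ge0 rho_lt1 envelope.
have geo_cvg : (fun m => rho ^+ m * V) @ \oo --> 0.
  rewrite -(mul0r V); apply: cvgM; last exact: cvg_cst.
  by apply: cvg_expr; rewrite ger0_norm.
apply/cvgrPdist_le => e e_gt0.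
have /cvgrPdist_le/(_ e e_gt0) [N _ hN] := geo_cvg.
exists (N * P)%N => // t /= Nt.
rewrite sub0r normrN (le_trans (envelope _ _ Nt)) //.
by rewrite (le_trans (ler_norm _)) // -normrN -sub0r; apply: hN => /=.
Qed.

Section LeaderFollowerError.
Variables (R : realType) (n : nat) (adj : rel 'I_n) (gamma : 'I_n -> bool)
  (T : 'I_n -> 'I_n -> nat) (x0 : R) (x : 'I_n -> int -> R).
Hypothesis follower_update : forall (i : 'I_n) (t : nat),
  x i (t.+1)%:Z =
    (1 + (deg adj i)%:R + (gamma i)%:R)^-1 *
    (x i t%:Z + \sum_(j : 'I_n | adj i j) x j (t%:Z - (T j i)%:Z)
     + (gamma i)%:R * x0).

Local Notation net := (leader_net adj gamma).

Definition err (v : option 'I_n) (s : int) : R :=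
  if v is Some i then x i s - x0 else 0.

Definition delay (v : option 'I_n) (i : 'I_n) : nat :=
  if v is Some j then T j i else 0.

Definition max_delay : nat := \max_(v : option 'I_n) \max_(i : 'I_n) delay v i.

Definition gain (i : 'I_n) : R := (1 + (deg adj i)%:R + (gamma i)%:R)^-1.

Definition min_gain : R := (n%:R + 2)^-1.

Lemma delay_le_max v i : (delay v i <= max_delay)%N.
Proof.
have inner := leq_bigmax (F := delay v) i.
exact: leq_trans inner (leq_bigmax (F := fun v => \max_(i : 'I_n) delay v i) v).
Qed.

Lemma gain_den_gt0 i : 0 < 1 + (deg adj i)%:R + (gamma i)%:R :> R.
Proof. have := ler0n R (deg adj i); have := ler0n R (gamma i); lra. Qed.

Lemma gain_nbhdK i : gain i * (1 + (deg adj i + gamma i)%:R) = 1.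
Proof. by rewrite /gain natrD addrA mulVf // gt_eqF ?gain_den_gt0. Qed.

Lemma gain_ge0 i : 0 <= gain i.
Proof. by rewrite invr_ge0 ltW ?gain_den_gt0. Qed.

Lemma min_gain_gt0 : 0 < min_gain.
Proof. by rewrite invr_gt0 ltr_wpDl ?ler0n. Qed.

Lemma min_gain_le1 : min_gain <= 1.
Proof. by rewrite invf_le1 ?ler_wpDl ?ler0n ?ltr_wpDl ?ler0n ?ler1n. Qed.

Lemma min_gain_le_gain i : min_gain <= gain i.
Proof.
have deg_le_n : (deg adj i)%:R <= n%:R :> R.
  by rewrite ler_nat (leq_trans (max_card _)) // card_ord.
have gamma_le1 : (gamma i)%:R <= 1 :> R by case: (gamma i).
rewrite /min_gain /gain lef_pV2 ?posrE ?gain_den_gt0 //; last first.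
  by have := ler0n R n; lra.
lra.
Qed.

Lemma min_gain_contraction K : 0 <= 1 - min_gain ^+ K < 1.
Proof.
rewrite subr_ge0 exprn_ile1 ?min_gain_le1 ?ltW ?min_gain_gt0 //=.
by rewrite ltrBlDr ltrDl exprn_gt0 ?min_gain_gt0.
Qed.

Lemma sum_nbhd_const i (a : R) :
  \sum_(v | net (Some i) v) a = (deg adj i + gamma i)%:R * a.
Proof.
rewrite big_option /= sumr_const -/(deg adj i) natrD mulrDl addrC mulr_natl.
by case: (gamma i); rewrite ?mul1r ?mul0r.
Qed.

Lemma err_update i (u : nat) :
  err (Some i) u.+1 =
    gain i * (err (Some i) u +
              \sum_(v | net (Some i) v) err v (u%:Z - (delay v i)%:Z)).
Proof.
rewrite big_option /= if_same add0r sumrB sumr_const -/(deg adj i).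
rewrite follower_update -mulr_natr /gain.
by field; rewrite gt_eqF ?gain_den_gt0.
Qed.

Lemma err_step_le i (u : nat) (V W : R) :
  0 <= W -> `|err (Some i) u| <= V ->
  \sum_(v | net (Some i) v) `|err v (u%:Z - (delay v i)%:Z)|
    <= (deg adj i + gamma i)%:R * V - W ->
  `|err (Some i) u.+1| <= V - min_gain * W.
Proof.
move=> W_ge0 own_le nbhd_le.
rewrite err_update normrM ger0_norm ?gain_ge0 //.
have sum_le : `|err (Some i) u +
    \sum_(v | net (Some i) v) err v (u%:Z - (delay v i)%:Z)|
    <= V + ((deg adj i + gamma i)%:R * V - W).
  by rewrite (le_trans (ler_normD _ _)) // lerD // (le_trans (ler_norm_sum _ _ _)).
apply: le_trans (ler_wpM2l (gain_ge0 i) sum_le) _.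
have -> : gain i * (V + ((deg adj i + gamma i)%:R * V - W)) =
          gain i * (1 + (deg adj i + gamma i)%:R) * V - gain i * W by ring.
by rewrite gain_nbhdK mul1r lerD2l lerN2 ler_wpM2r ?min_gain_le_gain.
Qed.

Definition err_bounded (t0 : nat) (V : R) : Prop :=
  forall v (s : int), t0%:Z - max_delay%:Z <= s -> `|err v s| <= V.

Lemma err_bounded_ge0 t0 V : err_bounded t0 V -> 0 <= V.
Proof. by move/(_ None t0); rewrite normr0; apply; rewrite gerBl. Qed.

Lemma err_bounded_window V :
  (forall v (s : int), - max_delay%:Z <= s <= 0 -> `|err v s| <= V) ->
  err_bounded 0 V.
Proof.
move=> window.
suff up_to t : forall v (s : int), - max_delay%:Z <= s <= t%:Z -> `|err v s| <= V.
  by move=> v s; rewrite sub0r => s_ge; apply: (up_to `|s|%N); rewrite s_ge; lia.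
elim: t => [|t IH] v s; first exact: window.
case/andP=> s_ge s_le; have [s_le_t|s_gt_t] := leP s t%:Z.
  by apply: IH; rewrite s_ge.
have -> : s = t.+1 by lia.
case: v => [i|]; last by apply: (window None 0); lia.
rewrite -[V](subr0 V) -(mulr0 min_gain); apply: err_step_le => //.
  by apply: IH; rewrite lexx andbT; lia.
rewrite subr0 -sum_nbhd_const; apply: ler_sum => w _.
by apply: IH; have := delay_le_max w i; lia.
Qed.

Definition err_decayed (t0 : nat) (V : R) (k : nat) (v : option 'I_n) : Prop :=
  forall s : nat, (t0 + k * max_delay.+1 <= s)%N ->
  `|err v s| <= (1 - min_gain ^+ k) * V.

Lemma err_decayed_leader t0 V k : 0 <= V -> err_decayed t0 V k None.
Proof.
move=> V_ge0 s _; rewrite normr0 mulr_ge0 //.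
by case/andP: (min_gain_contraction k).
Qed.

Lemma err_decayed_step t0 V k i w :
  err_bounded t0 V -> net (Some i) w -> err_decayed t0 V k w ->
  err_decayed t0 V k.+1 (Some i).
Proof.
move=> bounded iw w_decayed [|u]; first by rewrite mulSn; lia.
rewrite mulSn => u_ge.
have W_ge0 : 0 <= min_gain ^+ k * V.
  by rewrite mulr_ge0 ?exprn_ge0 ?(ltW min_gain_gt0) // (err_bounded_ge0 bounded).
apply: le_trans (err_step_le W_ge0 _ _) _.
- by apply: bounded; lia.
- rewrite -sum_nbhd_const !(bigD1 w iw) /= addrAC lerD //.
    have delay_le := delay_le_max w i.
    rewrite subzn; last by lia.
    by rewrite -[V in V - _]mul1r -mulrBl; apply: w_decayed; lia.
  by apply: ler_sum => v _; apply: bounded; have := delay_le_max v i; lia.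
- by rewrite exprS mulrBl mul1r mulrA.
Qed.

Lemma err_decayed_mono t0 V k k' v :
  0 <= V -> (k <= k')%N -> err_decayed t0 V k v -> err_decayed t0 V k' v.
Proof.
move=> V_ge0 le_kk' decayed s s_ge.
apply: le_trans (decayed s _) _.
  by have := leq_mul le_kk' (leqnn max_delay.+1); lia.
rewrite ler_wpM2r // lerD2l lerN2 ler_wiXn2l ?min_gain_le1 //.
exact: ltW min_gain_gt0.
Qed.

Lemma err_decayed_path t0 V p v :
  err_bounded t0 V -> path net v p -> last v p = None ->
  err_decayed t0 V (size p) v.
Proof.
move=> bounded; elim: p v => [|w p IH] v /=.
  by move=> _ ->; apply: err_decayed_leader (err_bounded_ge0 bounded).
case/andP=> vw wp p_last; case: v vw => [i|] vw.
  exact: err_decayed_step bounded vw (IH w wp p_last).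
exact: err_decayed_leader (err_bounded_ge0 bounded).
Qed.

Lemma err_bounded_init : exists V, err_bounded 0 V.
Proof.
exists (\sum_v \sum_(k < max_delay.+1) `|err v (- k%:Z)|).
apply: err_bounded_window => v s /andP[s_ge s_le].
have k_lt : (`|s|%N < max_delay.+1)%N by lia.
have -> : s = - (Ordinal k_lt : nat)%:Z by rewrite /=; lia.
rewrite (bigD1 v) //= (bigD1 (Ordinal k_lt)) //= -addrA lerDl.
by rewrite addr_ge0 ?sumr_ge0 // => w _; rewrite sumr_ge0.
Qed.

Lemma err_bounded_contract K t0 V :
  (forall v, err_decayed t0 V K v) ->
  err_bounded (t0 + (K * max_delay.+1 + max_delay)) ((1 - min_gain ^+ K) * V).
Proof. by move=> decayed v [m|m] s_ge; [apply: decayed | ]; lia. Qed.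

Hypothesis connected : net_connected adj gamma.

Lemma err_decayed_uniform :
  exists K, forall t0 V v, err_bounded t0 V -> err_decayed t0 V K v.
Proof.
have path_len v : exists k, forall t0 V, err_bounded t0 V -> err_decayed t0 V k v.
  have /connectP [p vp p_last] := connected v None.
  by exists (size p) => t0 V bounded; apply: err_decayed_path; rewrite -?p_last.
have [len len_decayed] := choice path_len.
exists (\max_(v : option 'I_n) len v)%N => t0 V v bounded.
apply: err_decayed_mono (err_bounded_ge0 bounded) _ (len_decayed v t0 V bounded).
exact: (leq_bigmax (F := len)).
Qed.

End LeaderFollowerError.

Theorem mainTheorem7 (R : realType) (n : nat) (adj : rel 'I_n)
  (gamma : 'I_n -> bool) (T : 'I_n -> 'I_n -> nat) (x0 : R)
  (x : 'I_n -> int -> R) :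
  symmetric adj -> irreflexive adj ->
  net_connected adj gamma ->
  (forall (i : 'I_n) (t : nat),
      x i (t.+1)%:Z =
        (1 + (deg adj i)%:R + (gamma i)%:R)^-1 *
        (x i t%:Z + \sum_(j : 'I_n | adj i j) x j (t%:Z - (T j i)%:Z)
         + (gamma i)%:R * x0)) ->
  forall i : 'I_n, (fun t : nat => x i t%:Z) @ \oo --> x0.
Proof.
move=> _ _ connected update i.
have [K decayed] := err_decayed_uniform update connected.
have [V bounded0] := err_bounded_init update.
pose P := (K * (max_delay T).+1 + max_delay T)%N.
have geometric m : err_bounded T x0 x (m * P) ((1 - min_gain R n ^+ K) ^+ m * V).
  elim: m => [|m IH]; first by rewrite mul0n expr0 mul1r.
  rewrite mulSnr exprS -mulrA; apply: err_bounded_contract => v.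
  exact: decayed.
apply/subr_cvg0/(cvg_geometric_envelope (P := P) (min_gain_contraction R n K)) => m t mt.
by apply: (geometric m (Some i)); lia.
Qed.
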